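(* For any graph $G$ with $\gamma_{t2}(G) \geq 3$, $ct_{\gamma_{t2}}(G) \leq 3$.
   Context: All graphs are finite, simple and connected. A semitotal dominating set of a graph $G$ is a set $D\subseteq V(G)$ such that every vertex of $V(G)\setminus D$ has a neighbour in $D$ and every vertex of $D$ is at distance at most two in $G$ from some other vertex of $D$; $\gamma_{t2}(G)$ denotes the minimum size of a semitotal dominating set of $G$. Contracting an edge $uv$ means deleting $u$ and $v$ and adding a new vertex adjacent to every neighbour of $u$ or $v$. $ct_{\gamma_{t2}}(G)$ is the smallest integer $k$ such that there is a set of $k$ edges of $G$ whose contraction yields a graph $G'$ with $\gamma_{t2}(G')<\gamma_{t2}(G)$. *)

From mathcomp Require Import all_boot.
Set Implicit Arguments. Unset Strict Implicit. Unset Printing Implicit Defensive.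

Section Graphs.
Variable V : finType.
Variable adj : rel V.

Definition simple_graph : Prop := symmetric adj /\ irreflexive adj.
Definition connected_graph : Prop := forall x y : V, connect adj x y.

Definition dist_le2 (u v : V) : bool :=
  (u != v) && (adj u v || [exists w, adj u w && adj w v]).

Definition semitotal_dom (D : {set V}) : bool :=
  [forall x, (x \notin D) ==> [exists y in D, adj x y]] &&
  [forall x in D, [exists y in D, (y != x) && dist_le2 x y]].

(* gamma_t2 : minimum size of a semitotal dominating set (the default #|V|
   is only reached when no semitotal dominating set exists) *)
Definition gamma_t2 : nat :=
  \big[minn/#|V|]_(D : {set V} | semitotal_dom D) #|D|.
End Graphs.

Section Contraction.
Variable T : finType.
Variable e : rel T.
Definition edge_set (F : {set {set T}}) : Prop :=
  forall f, f \in F -> exists u v, e u v /\ f = [set u; v].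

(* contracting the edges of F: vertices are the classes of the equivalence
   generated by F; two distinct classes are adjacent iff G has an edge
   between them *)
Definition crel (F : {set {set T}}) : rel T := fun a b => [set a; b] \in F.
Definition ccls (F : {set {set T}}) (x : T) : {set T} :=
  [set y | connect (crel F) x y].
Definition cvert (F : {set {set T}}) : {set {set T}} := [set ccls F x | x in T].
Definition contr_V (F : {set {set T}}) : finType := {A : {set T} | A \in cvert F}.
Definition contr_adj (F : {set {set T}}) : rel (contr_V F) :=
  fun A B => (val A != val B) &&
    [exists x in val A, exists y in val B, e x y].
End Contraction.
Arguments contr_adj {T} e F.
Arguments contr_V {T} F.

From mathcomp Require Import all_boot.
Set Implicit Arguments. Unset Strict Implicit. Unset Printing Implicit Defensive.

(* Let D be a minimum semitotal dominating set, so |D| >= 3. Contracting the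
   three edges of a walk p0 p1 p2 p3 merges its vertex set C into one vertex and
   leaves every other vertex alone; if C contains two vertices of D, one of
   which lies within distance two of a vertex of D outside C, then the image of
   D is a smaller semitotal dominating set of the contracted graph.
   Such a walk exists: take a in D and a partner b in D at distance at most
   two. If a or b has a partner c in D outside {a, b}, a walk through a, b and
   the middle vertex of an a-b path works (when that middle vertex is in D, it
   replaces b). Otherwise {a, b} is isolated in the distance-two graph on D;
   since G is connected, some edge uv leaves the closed neighbourhood of
   {a, b}, and with du in {a, b} adjacent to u and dv in D dominating v, the
   walk du u v dv works, the partner of du staying outside it. *)

Section SemitotalDomination.
Variables (V : finType) (adj : rel V).

Lemma gamma_t2_le_card : gamma_t2 adj <= #|V|.
Proof. by apply: (big_rec (leq^~ #|V|)) => // D x _ le_x; rewrite geq_min le_x orbT. Qed.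

Lemma gamma_t2_le D : semitotal_dom adj D -> gamma_t2 adj <= #|D|.
Proof.
rewrite /gamma_t2 => semD; have: D \in index_enum {set V} by rewrite mem_index_enum.
elim: (index_enum _) => //= X s IH; rewrite big_cons inE => /predU1P[<-|Ds].
  by rewrite semD geq_minl.
by case: ifP => _; rewrite ?geq_min IH ?orbT.
Qed.

Lemma gamma_t2_attained D0 :
  semitotal_dom adj D0 -> exists2 D, semitotal_dom adj D & #|D| = gamma_t2 adj.
Proof.
move=> semD0; case: (arg_minnP (fun D : {set V} => #|D|) semD0) => D semD minD.
exists D => //; apply/eqP; rewrite eqn_leq gamma_t2_le // andbT.
apply: (big_rec (leq #|D|)) => [|X x /minD DX]; first exact: max_card.
by rewrite leq_min DX.
Qed.

Lemma semitotal_dominated D x :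
  semitotal_dom adj D -> x \notin D -> exists2 y, y \in D & adj x y.
Proof.
by case/andP=> /forallP/(_ x)/implyP dom _ /dom/exists_inP[y yD xy]; exists y.
Qed.

Lemma semitotal_partner D d :
  semitotal_dom adj D -> d \in D -> exists2 d', d' \in D & dist_le2 adj d d'.
Proof.
by case/andP=> _ /forall_inP tot /tot/exists_inP[d' d'D /andP[_ dd']]; exists d'.
Qed.

End SemitotalDomination.

Section Contraction.
Variables (T : finType) (e : rel T) (F : {set {set T}}).
Local Notation r := (crel F).

Lemma crel_sym : symmetric r.
Proof. by move=> a b; rewrite /crel setUC. Qed.

Lemma connect_crel_sym : connect_sym r.
Proof. exact: sym_connect_sym crel_sym. Qed.

Lemma ccls_cvert x : ccls F x \in cvert F.
Proof. exact: imset_f. Qed.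

Definition contr_proj x : contr_V F := exist _ (ccls F x) (ccls_cvert x).

Lemma mem_contr_proj x y : (y \in val (contr_proj x)) = connect r x y.
Proof. by rewrite inE. Qed.

Lemma contr_proj_eq u v : (contr_proj u == contr_proj v) = connect r u v.
Proof.
apply/eqP/idP => [uv | ruv].
  by rewrite -mem_contr_proj uv mem_contr_proj connect0.
by apply: val_inj; apply/setP => z; rewrite !mem_contr_proj (same_connect connect_crel_sym ruv).
Qed.

Lemma contr_projP (X : contr_V F) : exists x, X = contr_proj x.
Proof. by case: X => A /[dup] /imsetP[x _ ->] ?; exists x; apply: val_inj. Qed.

Lemma contr_adj_proj u v u' v' :
  connect r u u' -> connect r v v' -> contr_proj u != contr_proj v -> e u' v' ->
  contr_adj e F (contr_proj u) (contr_proj v).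
Proof.
move=> uu' vv' uv eu'v'; rewrite /contr_adj (inj_eq val_inj) uv.
by apply/existsP; exists u'; rewrite mem_contr_proj uu'; apply/existsP; exists v';
  rewrite mem_contr_proj vv'.
Qed.

Lemma dist_le2_proj u v : contr_proj u != contr_proj v -> dist_le2 e u v ->
  dist_le2 (contr_adj e F) (contr_proj u) (contr_proj v).
Proof.
move=> uv /andP[_ /orP[euv | /existsP[w /andP[euw ewv]]]]; rewrite /dist_le2 uv /=.
  by rewrite (contr_adj_proj (connect0 _ u) (connect0 _ v)).
have [uw | uw] := boolP (connect r u w).
  by rewrite (contr_adj_proj uw (connect0 _ v)).
have [vw | vw] := boolP (connect r v w).
  by rewrite (contr_adj_proj (connect0 _ u) vw).
have uw' : contr_proj u != contr_proj w by rewrite contr_proj_eq.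
have wv' : contr_proj w != contr_proj v by rewrite contr_proj_eq connect_crel_sym.
apply/orP; right; apply/existsP; exists (contr_proj w).
by rewrite (contr_adj_proj (connect0 _ u) (connect0 _ w) uw' euw)
  (contr_adj_proj (connect0 _ w) (connect0 _ v) wv' ewv).
Qed.

Lemma semitotal_dom_proj (D : {set T}) : semitotal_dom e D ->
  (forall d, d \in D -> exists d1 d2,
     [/\ connect r d d1, d2 \in D, ~~ connect r d1 d2 & dist_le2 e d1 d2]) ->
  semitotal_dom (contr_adj e F) (contr_proj @: D).
Proof.
case/andP=> /forallP dom _ partner; apply/andP; split.
  apply/forallP => X; apply/implyP; case: (contr_projP X) => x -> xD'.
  have xD : x \notin D by apply: contra xD' => xD; apply: imset_f.
  have /existsP[y /andP[yD exy]] := implyP (dom x) xD.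
  apply/existsP; exists (contr_proj y); rewrite imset_f //=.
  apply: (contr_adj_proj (connect0 _ _) (connect0 _ _)) => //.
  by apply: contraNneq xD' => ->; apply: imset_f.
apply/forall_inP => _ /imsetP[d dD ->].
have [d1 [d2 [dd1 d2D d12 dist12]]] := partner d dD.
have -> : contr_proj d = contr_proj d1 by apply/eqP; rewrite contr_proj_eq.
apply/existsP; exists (contr_proj d2); rewrite imset_f //=.
have ne12 : contr_proj d1 != contr_proj d2 by rewrite contr_proj_eq.
by rewrite eq_sym ne12 dist_le2_proj.
Qed.

Lemma card_proj_lt (D : {set T}) d d' : d \in D -> d' \in D -> d != d' -> connect r d d' ->
  #|contr_proj @: D| < #|D|.
Proof.
move=> dD d'D dd' rdd'; rewrite ltn_neqAle leq_imset_card andbT.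
apply: contraNN dd' => /imset_injP inj; apply/eqP/inj => //.
by apply/eqP; rewrite contr_proj_eq.
Qed.

Lemma connect_crel_within (C : {set T}) u v :
  (forall a b, r a b -> a \in C) ->
  connect (r) u v -> (u == v) || (u \in C) && (v \in C).
Proof.
move=> FC /connectP[p]; elim: p u => [|y p IH] u /=; first by move=> _ ->; rewrite eqxx.
case/andP=> uy yp /(IH y yp) yv; rewrite (FC _ _ uy) /=.
case/orP: yv => [/eqP <- | /andP[_ ->]]; rewrite ?orbT //.
by rewrite (FC y u) ?orbT // crel_sym.
Qed.

End Contraction.

Section Merge.
Variables (T : finType) (e : rel T).

Definition mergeable (D C : {set T}) : bool :=
  (1 < #|D :&: C|) && [exists d1 in D :&: C, exists d2 in D :\: C, dist_le2 e d1 d2].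

Lemma mergeable_intro (D C : {set T}) x y d1 d2 :
  x \in D :&: C -> y \in D :&: C -> x != y ->
  d1 \in D :&: C -> d2 \in D :\: C -> dist_le2 e d1 d2 -> mergeable D C.
Proof.
move=> xDC yDC xy d1DC d2DC d12; apply/andP; split; first by apply/card_gt1P; exists x, y.
by apply/exists_inP; exists d1 => //; apply/exists_inP; exists d2.
Qed.

Section PathContraction.
Variables p0 p1 p2 p3 : T.
Let C := [set p0; p1; p2; p3].
Let F := [set [set p0; p1]; [set p1; p2]; [set p2; p3]].

Lemma connect_crel_path u v :
  connect (crel F) u v = (u == v) || (u \in C) && (v \in C).
Proof.
apply/idP/idP; first apply: connect_crel_within.
  move=> a b; rewrite /crel !inE => /orP[/orP[]|] /eqP/setP/(_ a);
  by rewrite !inE eqxx /= => /esym/orP[]/eqP->; rewrite eqxx ?orbT.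
case/orP=> [/eqP-> | /andP[uC vC]]; first exact: connect0.
have r01 : crel F p0 p1 by rewrite /crel !inE eqxx.
have r12 : crel F p1 p2 by rewrite /crel !inE eqxx ?orbT.
have r23 : crel F p2 p3 by rewrite /crel !inE eqxx ?orbT.
have r0 x : x \in C -> connect (crel F) p0 x.
  rewrite !inE => /orP[/orP[/orP[]|]|] /eqP->; first exact: connect0.
  - exact: connect1.
  - exact: connect_trans (connect1 r01) (connect1 r12).
  - exact: connect_trans (connect_trans (connect1 r01) (connect1 r12)) (connect1 r23).
by apply: connect_trans (r0 v vC); rewrite connect_crel_sym r0.
Qed.

Lemma gamma_t2_contr_path_lt D :
  semitotal_dom e D -> mergeable D C -> gamma_t2 (contr_adj e F) < #|D|.
Proof.
move=> semD /andP[/card_gt1P[x [y [/setIP[xD xC] /setIP[yD yC] xy]]]].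
case/exists_inP=> d1 /setIP[d1D d1C] /exists_inP[d2 /setDP[d2D d2C] d12].
have partner d : d \in D -> exists d1 d2, [/\ connect (crel F) d d1, d2 \in D,
    ~~ connect (crel F) d1 d2 & dist_le2 e d1 d2].
  move=> dD; have [dC | dC] := boolP (d \in C).
    exists d1, d2; rewrite !connect_crel_path dC d1C (negPf d2C) d2D d12 /=.
    rewrite ?andbF ?orbF ?orbT.
    by split=> //; apply: contraNneq d2C => <-.
  have [d' d'D dd'] := semitotal_partner semD dD.
  exists d, d'; rewrite connect0 connect_crel_path (negPf dC) /= ?andbF ?orbF.
  by split=> //; case/andP: dd'.
apply: leq_ltn_trans (gamma_t2_le (semitotal_dom_proj semD partner)) _.
by apply: (card_proj_lt xD yD xy); rewrite connect_crel_path xC yC orbT.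
Qed.

End PathContraction.
End Merge.

Lemma connect_cut_edge (T : finType) (e : rel T) (P : pred T) a c :
  connect e a c -> P a -> ~~ P c -> exists u v, [/\ e u v, P u & ~~ P v].
Proof.
case/connectP=> p; elim: p a => [|y p IH] a /=; first by move=> _ -> ->.
case/andP=> ay yp cy Pa; have [Py | nPy] := boolP (P y); first exact: IH Py.
by exists a, y.
Qed.

Section Walks.
Variables (T : finType) (e : rel T).
Hypotheses (esym : symmetric e) (eirr : irreflexive e).

Lemma adj_neq x y : e x y -> x != y.
Proof. by apply: contraTneq => ->; rewrite eirr. Qed.

Lemma dist_le2_adj x y : e x y -> dist_le2 e x y.
Proof. by move=> xy; rewrite /dist_le2 adj_neq ?xy. Qed.

Lemma dist_le2_adj2 x y z : x != z -> e x y -> e y z -> dist_le2 e x z.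
Proof.
move=> xz xy yz; rewrite /dist_le2 xz.
by apply/orP; right; apply/existsP; exists y; rewrite xy.
Qed.

Lemma dist_le2_sym x y : dist_le2 e x y -> dist_le2 e y x.
Proof.
case/andP=> xy /orP[exy | /existsP[w /andP[xw wy]]]; rewrite /dist_le2 eq_sym xy.
  by rewrite esym exy.
by apply/orP; right; apply/existsP; exists w; rewrite esym wy esym.
Qed.

Hypothesis conn : connected_graph e.

Lemma semitotal_domT : 1 < #|T| -> semitotal_dom e [set: T].
Proof.
move=> T2; apply/andP; split; first by apply/forallP => x; rewrite in_setT.
apply/forall_inP => x _.
have [z zx] : exists z, z \in [set~ x].
  by apply/card_gt0P; rewrite cardsC1 -ltnS prednK ?(ltnW T2).
have /connectP[[|y p] /= ] := conn x z; first by move=> _ zx'; rewrite zx' !inE eqxx in zx.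
case/andP=> xy _ _; apply/exists_inP; exists y; rewrite ?in_setT //.
by rewrite eq_sym adj_neq //; exact: dist_le2_adj.
Qed.

Variable D : {set T}.
Hypothesis semD : semitotal_dom e D.

Definition mergeable_walk : Prop :=
  exists p0 p1 p2 p3, [/\ e p0 p1, e p1 p2, e p2 p3 & mergeable e D [set p0; p1; p2; p3]].

Lemma mergeable_walk_link a b d c :
  a \in D -> b \in D -> dist_le2 e a b -> d \in [set a; b] ->
  c \in D -> c \notin [set a; b] -> dist_le2 e d c -> mergeable_walk.
Proof.
move=> aD bD /andP[ab ab2] dab cD cab dc.
have dD : d \in D by move: dab; rewrite !inE => /orP[]/eqP->.
move: dab cab; rewrite !inE negb_or => dab /andP[/negPf ca /negPf cb].
have dC (C : {set T}) : a \in C -> b \in C -> d \in D :&: C.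
  by move=> aC bC; rewrite inE dD; case/orP: dab => /eqP->.
case/orP: ab2 => [eab | /existsP[w /andP[eaw ewb]]].
  exists a, b, a, b; split=> //; first by rewrite esym.
  apply: (mergeable_intro _ _ ab (dC _ _ _) _ dc);
    by rewrite !inE ?aD ?bD ?cD ?ca ?cb ?eqxx ?orbT.
have [wD | wD] := boolP (w \in D).
  exists a, w, a, w; split=> //; first by rewrite esym.
  have /negPf ba : b != a by rewrite eq_sym.
  have /negPf bw : b != w by rewrite eq_sym adj_neq.
  apply: (mergeable_intro _ _ (adj_neq eaw) _ _ (dist_le2_adj ewb));
    by rewrite !inE ?aD ?wD ?bD ?ba ?bw ?eqxx ?orbT.
have /negPf cw : c != w by apply: contraNneq wD => <-.
exists a, w, b, w; split=> //; first by rewrite esym.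
apply: (mergeable_intro _ _ ab (dC _ _ _) _ dc);
  by rewrite !inE ?aD ?bD ?cD ?ca ?cb ?cw ?eqxx ?orbT.
Qed.

Lemma mergeable_walk_isolated a b c :
  a \in D -> b \in D -> dist_le2 e a b ->
  c \in D -> c \notin [set a; b] ->
  (forall d x, d \in [set a; b] -> x \in D -> dist_le2 e d x -> x \in [set a; b]) ->
  mergeable_walk.
Proof.
set A := [set a; b] => aD bD ab cD cA closedA.
have AD : A \subset D by apply/subsetP => x; rewrite !inE => /orP[]/eqP->.
pose N := [pred v | [exists d in A, (v == d) || e v d]].
have aN : N a by apply/exists_inP; exists a; rewrite ?inE eqxx.
have cN : ~~ N c.
  apply/exists_inP => -[d dA /orP[/eqP cd | ecd]]; first by rewrite cd dA in cA.
  by rewrite (closedA d c) // in cA; apply: dist_le2_adj; rewrite esym.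
have [u [v [euv /exists_inP[du duA udu] vN]]] := connect_cut_edge (conn a c) aN cN.
have [dv dvD vdv] : exists2 dv, dv \in D & (v == dv) || e v dv.
  have [vD | vD] := boolP (v \in D); first by exists v; rewrite ?eqxx.
  by have [y yD vy] := semitotal_dominated semD vD; exists y; rewrite ?vy ?orbT.
have dvA : dv \notin A by apply: contra vN => dvA; apply/exists_inP; exists dv.
have vA : v \notin A by apply: contra vN => vA; apply/exists_inP; exists v; rewrite ?eqxx.
have near_dv x : x \in A -> e x v -> dist_le2 e x dv.
  move=> xA xv; have xdv : x != dv by apply: contraNneq dvA => <-.
  case/orP: vdv => [/eqP <- | vdv]; [exact: dist_le2_adj | exact: dist_le2_adj2 xv vdv].
have uA : u \notin A.
  by apply: contra dvA => uA; apply: (closedA u) => //; apply: near_dv.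
have edu : e du u.
  by case/orP: udu => [/eqP udu | ]; [rewrite udu duA in uA | rewrite esym].
have evdv : e v dv.
  case/orP: vdv => [/eqP vdv | //]; case/negP: dvA; apply: (closedA du) => //.
  by rewrite -vdv; apply: dist_le2_adj2 edu euv; apply: contraNneq vA => <-.
have [o [oA duo du_o]] : exists o, [/\ o \in A, du != o & dist_le2 e du o].
  have [neq_ab _] := andP ab.
  move: duA; rewrite !inE => /orP[]/eqP->.
    by exists b; rewrite !inE eqxx orbT.
  exists a; split; [by rewrite !inE eqxx | by rewrite eq_sym | exact: dist_le2_sym].
have duD : du \in D := subsetP AD du duA.
have oD : o \in D := subsetP AD o oA.
have out_A x : x \notin A -> o == x = false by move=> xA; apply: contraNF xA => /eqP<-.
exists du, u, v, dv; split => //.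
apply: (mergeable_intro (x := du) (y := dv) _ _ _ _ _ du_o);
  rewrite ?inE ?duD ?dvD ?oD ?eqxx ?orbT //=.
  by apply: contraNneq dvA => <-.
by rewrite eq_sym (negPf duo) !out_A.
Qed.

Lemma exists_mergeable_walk : 3 <= #|D| -> mergeable_walk.
Proof.
move=> D3.
have [a aD] : exists a, a \in D by apply/card_gt0P; apply: leq_trans D3.
have [b bD ab] := semitotal_partner semD aD.
have [c cD cA] : exists2 c, c \in D & c \notin [set a; b].
  apply/subsetPn; apply: contraTN D3 => /subset_leq_card.
  by rewrite cards2 -ltnNge => /leq_ltn_trans; apply; case: (a != b).
have [link | isolated] :=
  boolP [exists d in [set a; b], exists x in D, dist_le2 e d x && (x \notin [set a; b])].
  case/exists_inP: link => d dA /exists_inP[x xD /andP[dx xA]].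
  exact: (mergeable_walk_link aD bD ab dA xD xA dx).
apply: (mergeable_walk_isolated aD bD ab cD cA) => d x dA xD dx.
apply: contraR isolated => xA; apply/exists_inP; exists d => //.
by apply/exists_inP; exists x; rewrite ?dx.
Qed.

End Walks.

Lemma card_set3_le (T : finType) (x y z : T) : #|[set x; y; z]| <= 3.
Proof.
apply: leq_trans (leq_card_setU _ _).1 _; rewrite cards1 addn1 ltnS.
by rewrite cards2; case: (_ != _).
Qed.

Theorem theorem4 (T : finType) (e : rel T) :
  simple_graph e -> connected_graph e -> 3 <= gamma_t2 e ->
  exists F : {set {set T}},
    edge_set e F /\ #|F| <= 3 /\ gamma_t2 (contr_adj e F) < gamma_t2 e.
Proof.
move=> [esym eirr] conn g3.
have T2 : 1 < #|T| := ltnW (leq_trans g3 (gamma_t2_le_card e)).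
have [D semD gD] := gamma_t2_attained (semitotal_domT eirr conn T2).
have D3 : 3 <= #|D| by rewrite gD.
have [p0 [p1 [p2 [p3 [e01 e12 e23 mergeD]]]]] :=
  exists_mergeable_walk esym eirr conn semD D3.
exists [set [set p0; p1]; [set p1; p2]; [set p2; p3]]; split; last split.
- move=> f; rewrite !inE => /orP[/orP[]|] /eqP->;
    [exists p0, p1 | exists p1, p2 | exists p2, p3]; by split.
- exact: card_set3_le.
- by rewrite -gD; apply: gamma_t2_contr_path_lt.
Qed.
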